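(* Let $(X,u)$ and $(Y,v)$ be Čech closure spaces, let $Y^X$ be the set of all continuous maps $(X,u)\to(Y,v)$, let $(f_\lambda)_{\lambda\in\Lambda}$ be a net in $Y^X$ and $f\in Y^X$. Then $(f_\lambda)$ converges continuously to $f$ if and only if $$\overline{\lim_{\Lambda}}\, f_\lambda^{-1}(B)\subset f^{-1}(v(B))\quad\text{for every subset } B\subset Y.$$
   Context: A Čech closure space $(X,u)$ is a set $X$ with an operator $u:\mathcal P(X)\to\mathcal P(X)$ satisfying $u(\emptyset)=\emptyset$, $A\subset u(A)$, and $u(A\cup B)=u(A)\cup u(B)$. The interior is $\mathrm{int}_u A=X\setminus u(X\setminus A)$; $U$ is a neighbourhood of $x$ if $x\in\mathrm{int}_uU$. A map $f:(X,u)\to(Y,v)$ is continuous if $f(u(A))\subset v(f(A))$ for all $A\subset X$. A net $(x_\mu)_{\mu\in M}$ converges to $x$ if for every neighbourhood $U$ of $x$ there is $\mu_0$ with $x_\mu\in U$ for all $\mu\ge\mu_0$. A net $(f_\lambda)_{\lambda\in\Lambda}$ in $Y^X$ converges continuously to $f\in Y^X$ if, whenever a net $(x_\mu)_{\mu\in M}$ converges to $x$ in $(X,u)$, the net $(f_\lambda(x_\mu))_{(\lambda,\mu)\in\Lambda\times M}$ (coordinatewise order) converges to $f(x)$ in $(Y,v)$. For a net $(A_\lambda)_{\lambda\in\Lambda}$ of subsets of $X$, its upper limit $\overline{\lim_{\Lambda}}A_\lambda$ is the set of all $x\in X$ such that for every $\lambda_0\in\Lambda$ and every neighbourhood $U$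 of $x$ there is $\lambda\ge\lambda_0$ with $A_\lambda\cap U\ne\emptyset$. *)

From Stdlib Require Import Classical FunctionalExtensionality PropExtensionality.

Set Implicit Arguments.

Definition set_union {X : Type} (A B : X -> Prop) : X -> Prop := fun x => A x \/ B x.
Definition set_compl {X : Type} (A : X -> Prop) : X -> Prop := fun x => ~ A x.

Record closure_space (X : Type) := ClosureSpace {
  cl : (X -> Prop) -> (X -> Prop);
  cl_empty : forall x, ~ cl (fun _ => False) x;
  cl_ext : forall A x, A x -> cl A x;
  cl_union : forall A B x, cl (set_union A B) x <-> (cl A x \/ cl B x)
}.

Definition interior {X} (u : closure_space X) (A : X -> Prop) : X -> Prop :=
  fun x => ~ cl u (set_compl A) x.
Definition nbhd {X} (u : closure_space X) (x : X) (U : X -> Prop) : Prop :=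
  interior u U x.

Definition image {X Y} (f : X -> Y) (A : X -> Prop) : Y -> Prop :=
  fun y => exists a, A a /\ y = f a.
Definition preimage {X Y} (f : X -> Y) (B : Y -> Prop) : X -> Prop :=
  fun x => B (f x).

Definition continuous {X Y} (u : closure_space X) (v : closure_space Y) (f : X -> Y) : Prop :=
  forall (A : X -> Prop) (x : X), cl u A x -> cl v (image f A) (f x).

Record directed {I : Type} (le : I -> I -> Prop) : Prop := Directed {
  dir_inhabited : inhabited I;
  dir_refl : forall i, le i i;
  dir_trans : forall i j k, le i j -> le j k -> le i k;
  dir_upper : forall i j, exists k, le i k /\ le j k
}.

Definition prod_le {I J : Type} (leI : I -> I -> Prop) (leJ : J -> J -> Prop)
  : (I * J) -> (I * J) -> Prop :=
  fun p q => leI (fst p) (fst q) /\ leJ (snd p) (snd q).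

Definition net_converges {X I : Type} (u : closure_space X) (le : I -> I -> Prop)
  (xs : I -> X) (p : X) : Prop :=
  forall U, nbhd u p U -> exists i0, forall i, le i0 i -> U (xs i).

Definition converges_continuously {X Y L : Type} (u : closure_space X) (v : closure_space Y)
  (leL : L -> L -> Prop) (fl : L -> X -> Y) (f : X -> Y) : Prop :=
  forall (M : Type) (leM : M -> M -> Prop) (xs : M -> X) (x : X),
    directed leM -> net_converges u leM xs x ->
    net_converges v (prod_le leL leM) (fun p => fl (fst p) (xs (snd p))) (f x).

Definition upper_limit {X L : Type} (u : closure_space X) (leL : L -> L -> Prop)
  (A : L -> X -> Prop) : X -> Prop :=
  fun x => forall l0 U, nbhd u x U -> exists l, leL l0 l /\ exists z, A l z /\ U z.

(* Both directions pass through one characterisation of the upper limit: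
   x lies in the upper limit of (A_l) exactly when some net (x_m) converging
   to x has x_m in A_l frequently in the product order on (l, m).  For the
   forward implication the net is indexed by pairs (level, neighbourhood of
   x); continuous convergence would then force f_l(x_m) eventually into the
   neighbourhood Y \ B of f(x) if f(x) were not in v(B).  For the converse, a
   net along which f_l(x_m) frequently leaves a neighbourhood V of f(x) puts x
   in the upper limit of the f_l^-1(Y \ V), so f(x) would be in v(Y \ V). *)
From Stdlib Require Import Classical FunctionalExtensionality PropExtensionality
  IndefiniteDescription.

Section ClosureSpace.

Context {X : Type} (u : closure_space X).

Lemma cl_mono (A B : X -> Prop) x :
  (forall z, A z -> B z) -> cl u A x -> cl u B x.
Proof.
  intros AB HA.
  assert (UAB : set_union A B = B).
  { apply functional_extensionality; intro z; apply propositional_extensionality.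
    unfold set_union; split; [intros [Az | Bz]|]; auto. }
  rewrite <- UAB; apply cl_union; now left.
Qed.

Lemma nbhd_setT x : nbhd u x (fun _ => True).
Proof.
  intro H; apply (cl_empty u x); revert H.
  apply cl_mono; intros z nT; apply nT; exact I.
Qed.

Lemma nbhd_setI x U V :
  nbhd u x U -> nbhd u x V -> nbhd u x (fun z => U z /\ V z).
Proof.
  intros HU HV H.
  apply (cl_mono _ (set_union (set_compl U) (set_compl V))) in H.
  - apply cl_union in H; destruct H; auto.
  - intros z nUV; unfold set_union, set_compl.
    destruct (classic (U z)); auto.
Qed.

Lemma nbhd_compl_of_not_cl B x : ~ cl u B x -> nbhd u x (set_compl B).
Proof.
  intros nBx H; apply nBx; revert H.
  apply cl_mono; intros z nnBz; exact (NNPP _ nnBz).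
Qed.

End ClosureSpace.

Definition eventually {I : Type} (le : I -> I -> Prop) (P : I -> Prop) : Prop :=
  exists i0, forall i, le i0 i -> P i.

Definition frequently {I : Type} (le : I -> I -> Prop) (P : I -> Prop) : Prop :=
  forall i0, exists i, le i0 i /\ P i.

Lemma not_eventually_frequently {I : Type} {le : I -> I -> Prop} {P : I -> Prop} :
  ~ eventually le P -> frequently le (fun i => ~ P i).
Proof.
  intros nev i0; apply NNPP; intro nfr.
  apply nev; exists i0; intros i le_i0i.
  apply NNPP; intro nPi; apply nfr; now exists i.
Qed.

Lemma frequently_eventually_meet {I : Type} {le : I -> I -> Prop} {P Q : I -> Prop} :
  frequently le P -> eventually le Q -> exists i, P i /\ Q i.
Proof.
  intros frP [i0 evQ].
  destruct (frP i0) as [i [le_i0i Pi]].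
  exists i; auto.
Qed.

Lemma directed_prod_le {I J : Type} {leI : I -> I -> Prop} {leJ : J -> J -> Prop} :
  directed leI -> directed leJ -> directed (prod_le leI leJ).
Proof.
  intros [[i] reflI transI upI] [[j] reflJ transJ upJ]; constructor.
  - exact (inhabits (i, j)).
  - intros p; split; auto.
  - intros p q r [] []; split; eauto.
  - intros [i1 j1] [i2 j2].
    destruct (upI i1 i2) as [i3 []], (upJ j1 j2) as [j3 []].
    exists (i3, j3); split; split; auto.
Qed.

Section NeighbourhoodNet.

Context {X : Type} (u : closure_space X) (x : X).

Definition nbhd_index : Type := {U : X -> Prop | nbhd u x U}.

Definition nbhd_index_le (U V : nbhd_index) : Prop :=
  forall z, proj1_sig V z -> proj1_sig U z.

Lemma directed_nbhd_index_le : directed nbhd_index_le.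
Proof.
  constructor.
  - exact (inhabits (exist _ _ (nbhd_setT u x))).
  - intros U z; auto.
  - intros U V W UV VW z Wz; auto.
  - intros [U HU] [V HV].
    exists (exist _ _ (nbhd_setI u x U V HU HV)).
    split; intros z []; auto.
Qed.

Lemma net_converges_nbhd_index {L : Type} (leL : L -> L -> Prop) (l : L)
  (xs : L * nbhd_index -> X) :
  (forall p, proj1_sig (snd p) (xs p)) ->
  net_converges u (prod_le leL nbhd_index_le) xs x.
Proof.
  intros xs_in U HU.
  exists (l, exist _ U HU); intros [l' [U' HU']] [_ U'U].
  apply U'U, (xs_in (l', exist _ U' HU')).
Qed.

End NeighbourhoodNet.

Lemma upper_limitP {X L : Type} (u : closure_space X) (leL : L -> L -> Prop)
  (A : L -> X -> Prop) (x : X) :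
  directed leL ->
  upper_limit u leL A x <->
  exists (M : Type) (leM : M -> M -> Prop) (xs : M -> X),
    directed leM /\ net_converges u leM xs x /\
    frequently (prod_le leL leM) (fun p => A (fst p) (xs (snd p))).
Proof.
  intros HL; split.
  - intros Hup.
    destruct (functional_choice
      (fun (m : L * nbhd_index u x) (p : L * X) =>
         leL (fst m) (fst p) /\ A (fst p) (snd p) /\ proj1_sig (snd m) (snd p)))
      as [g Hg].
    { intros [l0 [U HU]].
      destruct (Hup l0 U HU) as [l [le_l0l [z [Az Uz]]]].
      now exists (l, z). }
    destruct (dir_inhabited HL) as [l_any].
    exists (L * nbhd_index u x)%type, (prod_le leL (nbhd_index_le u x)),
      (fun m => snd (g m)).
    split; [|split].
    + exact (directed_prod_le HL (directed_nbhd_index_le u x)).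
    + apply net_converges_nbhd_index; [exact l_any|].
      intros m; apply (Hg m).
    + intros [a0 [l0 U0]].
      destruct (dir_upper HL a0 l0) as [l1 [le_a0l1 le_l0l1]].
      destruct (Hg (l1, U0)) as [le_l1g [Ag _]].
      exists (fst (g (l1, U0)), (l1, U0)); simpl.
      split; [split|exact Ag].
      * exact (dir_trans HL _ _ _ le_a0l1 le_l1g).
      * split; [exact le_l0l1 | intros z; auto].
  - intros (M & leM & xs & _ & Hxs & Hfreq) l0 U HU.
    destruct (Hxs U HU) as [m0 evU].
    destruct (Hfreq (l0, m0)) as [[l m] [[le_l0l le_m0m] Alxm]].
    exists l; split; [exact le_l0l|].
    exists (xs m); auto.
Qed.

Theorem theorem3 (X Y : Type) (u : closure_space X) (v : closure_space Y)
  (L : Type) (leL : L -> L -> Prop) (HL : directed leL)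
  (fl : L -> X -> Y) (f : X -> Y)
  (Hfl : forall l, continuous u v (fl l)) (Hf : continuous u v f) :
  converges_continuously u v leL fl f <->
  (forall (B : Y -> Prop) (x : X),
     upper_limit u leL (fun l => preimage (fl l) B) x -> preimage f (cl v B) x).
Proof.
  split.
  - intros Hcc B x Hup; apply NNPP; intro nBfx.
    destruct (proj1 (upper_limitP _ _ _ _ HL) Hup)
      as (M & leM & xs & HM & Hxs & Hfreq).
    destruct (frequently_eventually_meet Hfreq
                (Hcc M leM xs x HM Hxs _ (nbhd_compl_of_not_cl _ _ _ nBfx)))
      as [p [Bp nBp]].
    exact (nBp Bp).
  - intros Hup M leM xs x HM Hxs V HV.
    apply NNPP; intro nevV.
    apply HV, (Hup (set_compl V) x), (upper_limitP _ _ _ _ HL).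
    exists M, leM, xs.
    exact (conj HM (conj Hxs (not_eventually_frequently nevV))).
Qed.
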